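(* Let $i'$ be an index and $\mathcal B$ a set of $k-m\ge1$ indices not containing $i'$, with $\sigma_h>0$ for all $h\in\{i'\}\cup\mathcal B$ and $\mu_{i'}\ne\mu_j$ for all $j\in\mathcal B$. Then there is exactly one vector $(r_h)_{h\in\{i'\}\cup\mathcal B}$ with all $r_h>0$ and $\sum_h r_h=1$ satisfying $$\frac{(\mu_{i'}-\mu_j)^2}{\sigma_{i'}^2/r_{i'}+\sigma_j^2/r_j}=\frac{(\mu_{i'}-\mu_\ell)^2}{\sigma_{i'}^2/r_{i'}+\sigma_\ell^2/r_\ell}\ \ \forall j,\ell\in\mathcal B,\qquad r_{i'}=\sigma_{i'}\sqrt{\sum_{j\in\mathcal B}r_j^2/\sigma_j^2}.$$
   Context: The $\mu_h\in\mathbb R$ are (true) means and $\sigma_h^2$ (known) variances of normal sampling distributions; $r_h$ are sampling ratios. *)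

From mathcomp Require Import all_boot all_order all_algebra.
From mathcomp Require Import reals.
Set Implicit Arguments. Unset Strict Implicit. Unset Printing Implicit Defensive.
Import Order.TTheory GRing.Theory Num.Theory.
Local Open Scope ring_scope.

Definition prop3_conditions (R : realType) (T : finType) (mu sigma : T -> R)
    (i' : T) (B : {set T}) (r : T -> R) : Prop :=
  [/\ (forall h, h \in i' |: B -> 0 < r h),
      \sum_(h in i' |: B) r h = 1,
      (forall j l, j \in B -> l \in B ->
         (mu i' - mu j) ^+ 2 / (sigma i' ^+ 2 / r i' + sigma j ^+ 2 / r j) =
         (mu i' - mu l) ^+ 2 / (sigma i' ^+ 2 / r i' + sigma l ^+ 2 / r l)) &
      r i' = sigma i' * Num.sqrt (\sum_(j in B) r j ^+ 2 / sigma j ^+ 2)].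

From mathcomp Require Import all_boot all_order all_algebra.
From mathcomp Require Import all_classical all_reals all_analysis.
From mathcomp Require Import ring lra.
Set Implicit Arguments. Unset Strict Implicit. Unset Printing Implicit Defensive.
Import Order.TTheory GRing.Theory Num.Theory.
Import numFieldNormedType.Exports.
Local Open Scope ring_scope.

(* Write [d j = (mu i' - mu j)^2] and [s h = sigma h^2].  The balance
   equations force every admissible [r] to have the shape
   [r i' = lam * s i'], [r j = lam * s j * t / (d j - t)] with
   [0 < t < min d] (all balance ratios then equal [lam * t]), and the
   square-root condition becomes [sum_j s j (t / (d j - t))^2 = s i'].
   The left-hand side vanishes at [0], is strictly increasing and blows up
   at [min d], so it has exactly one root [t]; normalisation then fixes
   [lam]. *)

Section SqRatioSum.
Variables (R : realType) (T : finType) (B : {set T}) (d s : T -> R).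

Definition sq_ratio_sum (t : R) := \sum_(j in B) s j * (t / (d j - t)) ^+ 2.

Lemma sq_ratio_sum0 : sq_ratio_sum 0 = 0.
Proof. by rewrite /sq_ratio_sum big1 // => j _; rewrite mul0r expr0n mulr0. Qed.

Lemma sq_ratio_sum_continuous (x : R) :
  (forall j, j \in B -> x != d j) -> {for x, continuous sq_ratio_sum}.
Proof.
move=> x_neq_d; apply: (cvg_big add_continuous) => j jB.
have ratio_cvg : ((fun t => t / (d j - t)) @ x --> x / (d j - x))%classic.
  apply: cvgM; first exact: cvg_id.
  apply: cvgV; first by rewrite subr_eq0 eq_sym x_neq_d.
  by apply: cvgB; [exact: cvg_cst | exact: cvg_id].
by apply: cvgM; [exact: cvg_cst | exact: cvgM].
Qed.

Hypothesis s_gt0 : forall j, j \in B -> 0 < s j.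

Lemma sq_ratio_sum_ge0 (t : R) : 0 <= sq_ratio_sum t.
Proof.
by apply: sumr_ge0 => j jB; rewrite mulr_ge0 ?sqr_ge0 ?ltW ?s_gt0.
Qed.

Variable j0 : T.
Hypothesis j0B : j0 \in B.

Lemma sq_ratio_sum_lt (t1 t2 : R) : 0 <= t1 -> t1 < t2 ->
  (forall j, j \in B -> t2 < d j) -> sq_ratio_sum t1 < sq_ratio_sum t2.
Proof.
move=> t1_ge0 lt_t12 t2_lt_d.
apply: ltr_sum; first by apply/hasP; exists j0; rewrite ?mem_index_enum.
move=> j jB; rewrite ltr_pM2l ?s_gt0 //.
have dt1 : 0 < d j - t1 by rewrite subr_gt0 (lt_trans lt_t12) ?t2_lt_d.
have dt2 : 0 < d j - t2 by rewrite subr_gt0 t2_lt_d.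
have ratio_lt : t1 / (d j - t1) < t2 / (d j - t2).
  rewrite ltr_pdivrMr // mulrAC ltr_pdivlMr //.
  have dj_gt0 : 0 < d j by rewrite (le_lt_trans t1_ge0) // (lt_trans lt_t12) ?t2_lt_d.
  have : 0 < d j * (t2 - t1) by rewrite mulr_gt0 ?subr_gt0.
  nra.
by rewrite ltrXn2r // divr_ge0 // ltW.
Qed.

Lemma sq_ratio_sum_inj (t1 t2 : R) : 0 <= t1 -> 0 <= t2 ->
  (forall j, j \in B -> t1 < d j) -> (forall j, j \in B -> t2 < d j) ->
  sq_ratio_sum t1 = sq_ratio_sum t2 -> t1 = t2.
Proof.
move=> t1_ge0 t2_ge0 t1_lt_d t2_lt_d eq12.
case: (ltgtP t1 t2) => // [lt12 | lt21].
- by move: (sq_ratio_sum_lt t1_ge0 lt12 t2_lt_d); rewrite eq12 ltxx.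
- by move: (sq_ratio_sum_lt t2_ge0 lt21 t1_lt_d); rewrite eq12 ltxx.
Qed.

Hypothesis d_gt0 : forall j, j \in B -> 0 < d j.

(* The summand of a [j1] minimizing [d] alone reaches [a] at
   [t1 = d j1 c / (1 + c)], where [c = sqrt (a / s j1)]. *)
Lemma sq_ratio_sum_reaches (a : R) : 0 < a ->
  exists t1, [/\ 0 < t1, (forall j, j \in B -> t1 < d j) & a <= sq_ratio_sum t1].
Proof.
move=> a_gt0.
have [j1 j1B j1_min] := arg_minP d j0B.
set m := d j1; set c := Num.sqrt (a / s j1).
have m_gt0 : 0 < m by exact: d_gt0.
have c_gt0 : 0 < c by rewrite sqrtr_gt0 divr_gt0 ?s_gt0.
have c1_gt0 : 0 < 1 + c by rewrite addr_gt0.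
exists (m * c / (1 + c)); split; first by rewrite divr_gt0 ?mulr_gt0.
  move=> j jB; apply: (lt_le_trans _ (j1_min j jB)).
  by rewrite ltr_pdivrMr // mulrDr mulr1 ltrDr.
rewrite /sq_ratio_sum (bigD1 j1) //= -/m.
have -> : m * c / (1 + c) / (m - m * c / (1 + c)) = c.
  have -> : m - m * c / (1 + c) = m / (1 + c) by field; rewrite lt0r_neq0.
  by field; rewrite !lt0r_neq0.
have -> : s j1 * c ^+ 2 = a.
  by rewrite sqr_sqrtr ?divr_ge0 ?ltW ?s_gt0 // mulrC divfK // lt0r_neq0 ?s_gt0.
rewrite lerDl; apply: sumr_ge0 => j /andP[jB _].
by rewrite mulr_ge0 ?sqr_ge0 ?ltW ?s_gt0.
Qed.

Lemma sq_ratio_sum_root (a : R) : 0 < a ->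
  exists t, [/\ 0 < t, (forall j, j \in B -> t < d j) & sq_ratio_sum t = a].
Proof.
move=> a_gt0; have [t1 [t1_gt0 t1_lt_d a_le]] := sq_ratio_sum_reaches a_gt0.
have cont : {within `[0, t1], continuous sq_ratio_sum}%classic.
  apply: continuous_subspace_itv => x; rewrite in_itv /= => /andP[_ x_le].
  apply: sq_ratio_sum_continuous => j jB.
  by rewrite lt_eqF // (le_lt_trans x_le) ?t1_lt_d.
have [t] : exists2 t, t \in `[0, t1] & sq_ratio_sum t = a.
  apply: IVT => //; first exact: ltW.
  by rewrite sq_ratio_sum0 ge_min le_max a_le ltW ?orbT.
rewrite in_itv /= => /andP[t_ge0 t_le] Gt.
exists t; split => //.
- rewrite lt_neqAle t_ge0 andbT; apply: contraTneq a_gt0 => t0.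
  by rewrite -Gt -t0 sq_ratio_sum0 ltxx.
- by move=> j jB; rewrite (le_lt_trans t_le) ?t1_lt_d.
Qed.

End SqRatioSum.

Lemma ratio_of_alloc (F : fieldType) (x y D S t : F) :
  x != 0 -> y != 0 -> S != 0 -> t != 0 -> D != 0 -> D - t != 0 ->
  D / (x / (x / S) + y / (y * (t / (D - t)) / S)) = t / S.
Proof.
move=> x0 y0 S0 t0 D0 Dt0.
have -> : x / (x / S) + y / (y * (t / (D - t)) / S) = S * D / t.
  by field; rewrite x0 y0 S0 t0 Dt0.
by field; rewrite S0 t0 D0.
Qed.

Lemma alloc_of_ratio (F : realFieldType) (x y a b D : F) :
  0 < x -> 0 < y -> 0 < a -> 0 < b -> 0 < D ->
  let t := D / (x / a + y / b) / (a / x) in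
  [/\ 0 < t, t < D & b = a / x * (y * (t / (D - t)))].
Proof.
move=> x_gt0 y_gt0 a_gt0 b_gt0 D_gt0 t.
have xa_gt0 : 0 < x / a by rewrite divr_gt0.
have yb_gt0 : 0 < y / b by rewrite divr_gt0.
have sum_gt0 : 0 < x / a + y / b by rewrite addr_gt0.
have tE : t = D * (x / a) / (x / a + y / b).
  by rewrite /t; field; rewrite !lt0r_neq0 ?addr_gt0 ?mulr_gt0.
have DtE : D - t = D * (y / b) / (x / a + y / b).
  by rewrite tE; field; rewrite !lt0r_neq0 ?addr_gt0 ?mulr_gt0.
split.
- by rewrite tE divr_gt0 // mulr_gt0.
- by rewrite tE ltr_pdivrMr // ltr_pM2l // ltrDl.
- by rewrite DtE tE; field; rewrite !lt0r_neq0 ?addr_gt0 ?mulr_gt0.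
Qed.

Section Proposition3.
Variables (R : realType) (T : finType) (mu sigma : T -> R) (i' : T).
Variable B : {set T}.
Hypothesis i'_notin_B : i' \notin B.
Hypothesis sigma_gt0 : forall h, h \in i' |: B -> 0 < sigma h.
Hypothesis mu_neq : forall j, j \in B -> mu i' != mu j.

Let d (j : T) : R := (mu i' - mu j) ^+ 2.
Let s (j : T) : R := sigma j ^+ 2.

Let s_gt0 h : h \in i' |: B -> 0 < s h.
Proof. by move=> hA; rewrite exprn_gt0 ?sigma_gt0. Qed.

Let sB_gt0 j : j \in B -> 0 < s j.
Proof. by move=> jB; rewrite s_gt0 ?setU1r. Qed.

Let d_gt0 j : j \in B -> 0 < d j.
Proof.
move=> jB; rewrite lt_neqAle sqr_ge0 andbT eq_sym sqrf_eq0 subr_eq0.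
exact: mu_neq.
Qed.

Definition alloc (t : R) (h : T) : R :=
  if h == i' then s i' else s h * (t / (d h - t)).

Definition normalized_alloc (t : R) (h : T) : R :=
  alloc t h / \sum_(k in i' |: B) alloc t k.

Lemma alloc_i' t : alloc t i' = s i'.
Proof. by rewrite /alloc eqxx. Qed.

Lemma alloc_B t j : j \in B -> alloc t j = s j * (t / (d j - t)).
Proof. by move=> jB; rewrite /alloc ifN // (memPn i'_notin_B). Qed.

Lemma alloc_gt0 t : 0 < t -> (forall j, j \in B -> t < d j) ->
  forall h, h \in i' |: B -> 0 < alloc t h.
Proof.
move=> t_gt0 t_lt_d h; rewrite in_setU1 => /orP[/eqP-> | hB].
  by rewrite alloc_i' s_gt0 ?setU11.
by rewrite alloc_B // mulr_gt0 ?sB_gt0 // divr_gt0 // subr_gt0 t_lt_d.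
Qed.

Lemma normalized_alloc_conditions t : 0 < t ->
  (forall j, j \in B -> t < d j) -> sq_ratio_sum B d s t = s i' ->
  prop3_conditions mu sigma i' B (normalized_alloc t).
Proof.
move=> t_gt0 t_lt_d Gt; rewrite /normalized_alloc.
set S := \sum_(k in i' |: B) alloc t k.
have alloc_pos := alloc_gt0 t_gt0 t_lt_d.
have S_gt0 : 0 < S.
  rewrite /S (bigD1 i') ?setU11 //= ltr_wpDr ?alloc_pos ?setU11 //.
  by apply: sumr_ge0 => h /andP[hA _]; rewrite ltW ?alloc_pos.
have ratio_t j : j \in B ->
    (mu i' - mu j) ^+ 2 / (sigma i' ^+ 2 / (alloc t i' / S) +
                          sigma j ^+ 2 / (alloc t j / S)) = t / S.
  move=> jB; rewrite alloc_i' alloc_B //.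
  apply: ratio_of_alloc; rewrite ?lt0r_neq0 ?subr_gt0 ?t_lt_d //.
  - exact: s_gt0 (setU11 _ _).
  - exact: sB_gt0.
  - exact: d_gt0.
split.
- by move=> h hA; rewrite divr_gt0 ?alloc_pos.
- by rewrite -mulr_suml mulfV // lt0r_neq0.
- by move=> j l jB lB; rewrite !ratio_t.
have -> : \sum_(j in B) (alloc t j / S) ^+ 2 / sigma j ^+ 2 = (sigma i' / S) ^+ 2.
  rewrite expr_div_n -[sigma i' ^+ 2]/(s i') -Gt mulr_suml.
  apply: eq_bigr => j jB; rewrite alloc_B //.
  by rewrite /s; field; rewrite !lt0r_neq0 ?subr_gt0 ?t_lt_d ?sigma_gt0 ?setU1r.
by rewrite sqrtr_sqr ger0_norm ?divr_ge0 ?ltW ?sigma_gt0 ?setU11 // mulrA alloc_i'.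
Qed.

Variable j0 : T.
Hypothesis j0B : j0 \in B.

Lemma alloc_root : exists t,
  [/\ 0 < t, forall j, j \in B -> t < d j & sq_ratio_sum B d s t = s i'].
Proof. exact: (sq_ratio_sum_root sB_gt0 j0B d_gt0 (s_gt0 (setU11 i' B))). Qed.

Lemma alloc_root_unique t t' : 0 < t -> 0 < t' ->
  (forall j, j \in B -> t < d j) -> (forall j, j \in B -> t' < d j) ->
  sq_ratio_sum B d s t = s i' -> sq_ratio_sum B d s t' = s i' -> t = t'.
Proof.
move=> t_gt0 t'_gt0 t_lt_d t'_lt_d Gt Gt'.
apply: (sq_ratio_sum_inj sB_gt0 j0B (ltW t_gt0) (ltW t'_gt0) t_lt_d t'_lt_d).
by rewrite Gt Gt'.
Qed.

Lemma balanced_alloc (r : T -> R) :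
  (forall h, h \in i' |: B -> 0 < r h) ->
  (forall j l, j \in B -> l \in B ->
     (mu i' - mu j) ^+ 2 / (sigma i' ^+ 2 / r i' + sigma j ^+ 2 / r j) =
     (mu i' - mu l) ^+ 2 / (sigma i' ^+ 2 / r i' + sigma l ^+ 2 / r l)) ->
  exists t, [/\ 0 < t, forall j, j \in B -> t < d j &
    forall h, h \in i' |: B -> r h = r i' / s i' * alloc t h].
Proof.
move=> r_gt0 balanced.
have ri'_gt0 : 0 < r i' by rewrite r_gt0 ?setU11.
pose t := d j0 / (s i' / r i' + s j0 / r j0) / (r i' / s i').
have t_alloc j : j \in B ->
    [/\ 0 < t, t < d j & r j = r i' / s i' * (s j * (t / (d j - t)))].
  move=> jB; rewrite /t /d /s (balanced j0 j) //.
  by apply: alloc_of_ratio; rewrite ?s_gt0 ?sB_gt0 ?d_gt0 ?r_gt0 ?setU11 ?setU1r.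
have [t_gt0 _ _] := t_alloc j0 j0B.
exists t; split => // [j /t_alloc[] // | h].
rewrite in_setU1 => /orP[/eqP-> | hB]; last by rewrite alloc_B //; case: (t_alloc h hB).
by rewrite alloc_i' divfK // lt0r_neq0 ?s_gt0 ?setU11.
Qed.

Lemma conditions_normalized_alloc (r : T -> R) :
  prop3_conditions mu sigma i' B r ->
  exists t, [/\ 0 < t, forall j, j \in B -> t < d j,
    sq_ratio_sum B d s t = s i' &
    forall h, h \in i' |: B -> r h = normalized_alloc t h].
Proof.
case=> r_gt0 r_sum1 balanced r_i'.
have [t [t_gt0 t_lt_d r_alloc]] := balanced_alloc r_gt0 balanced.
set lam := r i' / s i' in r_alloc.
have lam_gt0 : 0 < lam by rewrite divr_gt0 ?r_gt0 ?s_gt0 ?setU11.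
have sigma_i'_gt0 : 0 < sigma i' by rewrite sigma_gt0 ?setU11.
have Gt : sq_ratio_sum B d s t = s i'.
  have sumE : \sum_(j in B) r j ^+ 2 / sigma j ^+ 2 = lam ^+ 2 * sq_ratio_sum B d s t.
    rewrite mulr_sumr; apply: eq_bigr => j jB.
    rewrite r_alloc ?setU1r // alloc_B // /s.
    by field; rewrite !lt0r_neq0 ?subr_gt0 ?t_lt_d ?sigma_gt0 ?setU1r.
  have r_i'E : r i' = lam * sigma i' * sigma i'.
    by rewrite r_alloc ?setU11 // alloc_i' -mulrA.
  move: r_i'; rewrite sumE sqrtrM ?sqr_ge0 // sqrtr_sqr ger0_norm ?ltW // r_i'E.
  rewrite -mulrA mulrCA => /(mulfI (lt0r_neq0 sigma_i'_gt0)).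
  move=> /(mulfI (lt0r_neq0 lam_gt0)) sigma_i'E.
  by rewrite /s sigma_i'E sqr_sqrtr //; apply: sq_ratio_sum_ge0.
exists t; split => // h hA.
have lamS : lam * \sum_(k in i' |: B) alloc t k = 1.
  by rewrite -r_sum1 mulr_sumr; apply: eq_bigr => k kA; rewrite r_alloc.
by rewrite r_alloc // /normalized_alloc -[lam]invrK (mulr1_eq lamS) mulrC.
Qed.

End Proposition3.

Theorem proposition3 (R : realType) (T : finType) (mu sigma : T -> R)
    (i' : T) (B : {set T}) :
  i' \notin B -> (0 < #|B|)%N ->
  (forall h, h \in i' |: B -> 0 < sigma h) ->
  (forall j, j \in B -> mu i' != mu j) ->
  exists r : T -> R,
    prop3_conditions mu sigma i' B r /\
    forall r' : T -> R, prop3_conditions mu sigma i' B r' ->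
      forall h, h \in i' |: B -> r' h = r h.
Proof.
move=> i'_notin_B /card_gt0P[j0 j0B] sigma_gt0 mu_neq.
have [t [t_gt0 t_lt_d Gt]] := alloc_root sigma_gt0 mu_neq j0B.
exists (normalized_alloc mu sigma i' B t).
split; first exact: normalized_alloc_conditions.
move=> r /(conditions_normalized_alloc i'_notin_B sigma_gt0 mu_neq j0B).
move=> [t' [t'_gt0 t'_lt_d Gt' r_alloc]] h hA.
by rewrite r_alloc // (alloc_root_unique sigma_gt0 j0B t'_gt0 t_gt0 t'_lt_d t_lt_d Gt' Gt).
Qed.
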